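(* Let $S$ be an irreducible constraint over an alphabet $\Sigma$, let $\{\Sigma_0,\Sigma_1\}$ be a partition of $\Sigma$, and let $n_0,n_1,r$ be positive integers. There exists a deterministic $(S,n_0,n_1)$-VLE whose edges all have length at most $r$ if and only if $S$ is presented by an irreducible deterministic VLG $H=(V,E,L)$ whose edges all have length at most $r$ and such that $V$ contains a subset of principal states with respect to $(n_0,n_1)$.
   Context: A constraint over $\Sigma$ is the set of all words generated (by reading edge labels) along finite paths of some finite directed graph with edges labeled by symbols of $\Sigma$; it is irreducible if it can be presented by a deterministic (no two outgoing edges of a state share a label) strongly connected such graph. A variable-length graph (VLG) $H=(V,E,L)$ is a finite directed multigraph whose edges are labeled by nonempty finite words over $\Sigma$; the length of an edge is the length of its label. The constraint $S(H)$ presented by $H$ is the set of all consecutive sub-words of words obtained by concatenating labels along finite paths of $H$. $H$ is deterministic if for each state the labels of its outgoing edges form a prefix-free list (no label is a prefix of any other label in the list); irreducible if strongly connected; lossless if no two distinct paths with the same initial and terminal state generate the same word. A word over $\Sigma$ is even/odd according to the parity of the number of its symbols in $\Sigma_1$. For integers $n,\ell>0$ and a finite-support integer sequence $\mu$, $\mathsf{K}_\ell(\mu,n)=n^\ell-\sum_{i=1}^{\ell}\mu_i n^{\ell-i}$ (with $0^0=1$). For a pair $(\eta,\omega)$ of finite-support nonnegative integer sequences, put $\mathsf{K}^\pm_\ell=\mathsf{K}_\ell(\eta\pm\omega,n_0\pm n_1)$, let $\mathsf{r}$ be the largest index in the union of their supports (take $\mathsf{r}=0$ if both are zero), and $\mathsf{K}^\pm=\mathsf{K}^\pm_{\mathsf{r}}$.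 An $(S,n_0,n_1)$-VLE is a VLG $\mathcal{E}$ such that: (E1) $\mathcal{E}$ is lossless; (E2) $S(\mathcal{E})\subseteq S$; and, for each state $u$, letting $\eta_\ell(u)$ (resp. $\omega_\ell(u)$) be the number of outgoing edges of $u$ of length $\ell$ with even (resp. odd) label and computing the quantities above for $(\eta(u),\omega(u))$: (E3) $\sum_{\ell\ge1}(\eta_\ell(u)+\omega_\ell(u))/(n_0+n_1)^\ell=1$; (E4) $\mathsf{K}^+_\ell(u)\ge|\mathsf{K}^-_\ell(u)|$ for every $\ell\ge1$. A nonempty subset $V'\subseteq V$ of a VLG $H$ is a set of principal states with respect to $(n_0,n_1)$ if, for every $u\in V'$, letting $(\eta(u|V'),\omega(u|V'))$ be the even/odd length distribution of the labels of the outgoing edges of $u$ in the subgraph of $H$ induced by $V'$ (edges with both endpoints in $V'$), and $\mathsf{K}^\pm_\ell(u),\mathsf{K}^\pm(u),\mathsf{r}(u)$ the corresponding quantities, one has $\mathsf{K}^+(u)\le-|\mathsf{K}^-(u)|$ and $\mathsf{K}^+_\ell(u)\ge|\mathsf{K}^-_\ell(u)|$ for $\ell=1,\dots,\mathsf{r}(u)-1$. *)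

From mathcomp Require Import all_boot all_order all_algebra.
Set Implicit Arguments. Unset Strict Implicit. Unset Printing Implicit Defensive.
Import Order.TTheory GRing.Theory Num.Theory.

Section Defs.
Variable Sigma : finType.

Record lgraph := LGraph {
  gst : finType;
  ged : finType;
  gsrc : ged -> gst;
  gdst : ged -> gst;
  glab : ged -> Sigma;
  gst_nonempty : 0 < #|gst|
}.

Fixpoint gpath (G : lgraph) (u : gst G) (p : seq (ged G)) : bool :=
  match p with
  | [::] => true
  | e :: p' => (gsrc e == u) && gpath (gdst e) p'
  end.

Definition gend (G : lgraph) (u : gst G) (p : seq (ged G)) : gst G :=
  last u (map (@gdst G) p).

Definition gdeterministic (G : lgraph) : Prop :=
  forall e e' : ged G, e != e' -> gsrc e = gsrc e' -> glab e <> glab e'.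

Definition gstrongly_connected (G : lgraph) : Prop :=
  forall u v : gst G, exists p, gpath u p /\ gend u p = v.

Definition gpresents (G : lgraph) (S : seq Sigma -> Prop) : Prop :=
  forall w, S w <-> exists (u : gst G) p, gpath u p /\ w = map (@glab G) p.

Definition irreducible_constraint (S : seq Sigma -> Prop) : Prop :=
  exists G : lgraph, [/\ gdeterministic G, gstrongly_connected G & gpresents G S].

Record vlg := VLG {
  vst : finType;
  ved : finType;
  vsrc : ved -> vst;
  vdst : ved -> vst;
  vlab : ved -> seq Sigma;
  vlab_nonempty : forall e, vlab e != [::];
  vst_nonempty : 0 < #|vst|
}.

Fixpoint vpath (H : vlg) (u : vst H) (p : seq (ved H)) : bool :=
  match p with
  | [::] => true
  | e :: p' => (vsrc e == u) && vpath (vdst e) p'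
  end.

Definition vend (H : vlg) (u : vst H) (p : seq (ved H)) : vst H :=
  last u (map (@vdst H) p).

Definition vword (H : vlg) (p : seq (ved H)) : seq Sigma :=
  flatten (map (@vlab H) p).

Definition inSH (H : vlg) (w : seq Sigma) : Prop :=
  exists (u : vst H) p, vpath u p /\ infix w (vword p).

Definition vpresents (H : vlg) (S : seq Sigma -> Prop) : Prop :=
  forall w, S w <-> inSH H w.

Definition vdeterministic (H : vlg) : Prop :=
  forall e e' : ved H, e != e' -> vsrc e = vsrc e' -> ~~ prefix (vlab e) (vlab e').

Definition virreducible (H : vlg) : Prop :=
  forall u v : vst H, exists p, vpath u p /\ vend u p = v.

Definition lossless (H : vlg) : Prop :=
  forall (u : vst H) (p q : seq (ved H)),
    vpath u p -> vpath u q -> vend u p = vend u q -> vword p = vword q -> p = q.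

Definition max_len (H : vlg) (r : nat) : Prop :=
  forall e : ved H, size (vlab e) <= r.

Definition odd_word (S1 : {set Sigma}) (w : seq Sigma) : bool :=
  odd (count (mem S1) w).

Definition eta_of (S1 : {set Sigma}) (s : seq (seq Sigma)) (l : nat) : nat :=
  count (fun w => (size w == l) && ~~ odd_word S1 w) s.
Definition omega_of (S1 : {set Sigma}) (s : seq (seq Sigma)) (l : nat) : nat :=
  count (fun w => (size w == l) && odd_word S1 w) s.

(* largest index in the union of the supports of eta and omega (0 if none) *)
Definition rr (s : seq (seq Sigma)) : nat := \max_(w <- s) size w.

Definition Kl (l : nat) (mu : nat -> int) (n : int) : int :=
  (n ^+ l - \sum_(1 <= i < l.+1) mu i * n ^+ (l - i)%N)%R.

Definition Kplus (S1 : {set Sigma}) (n0 n1 : nat) (s : seq (seq Sigma)) (l : nat) : int :=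
  Kl l (fun i => (Posz (eta_of S1 s i) + Posz (omega_of S1 s i))%R) (Posz n0 + Posz n1)%R.
Definition Kminus (S1 : {set Sigma}) (n0 n1 : nat) (s : seq (seq Sigma)) (l : nat) : int :=
  Kl l (fun i => (Posz (eta_of S1 s i) - Posz (omega_of S1 s i))%R) (Posz n0 - Posz n1)%R.

Definition out_labels (H : vlg) (u : vst H) : seq (seq Sigma) :=
  [seq vlab e | e <- enum (ved H) & vsrc e == u].

Definition induced_out_labels (H : vlg) (V' : {set vst H}) (u : vst H) : seq (seq Sigma) :=
  [seq vlab e | e <- enum (ved H) & [&& vsrc e == u, vsrc e \in V' & vdst e \in V']].

Definition is_VLE (S : seq Sigma -> Prop) (S1 : {set Sigma}) (n0 n1 : nat) (H : vlg) : Prop :=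
  [/\ lossless H,
      (forall w, inSH H w -> S w) &
      forall u : vst H, let s := out_labels u in
        (\sum_(1 <= l < (rr s).+1)
            ((eta_of S1 s l + omega_of S1 s l)%:R / ((n0 + n1)%:R ^+ l)) = 1 :> rat)%R
        /\ (forall l : nat, (1 <= l)%N -> (`|Kminus S1 n0 n1 s l| <= Kplus S1 n0 n1 s l)%R)].

Definition principal_states (S1 : {set Sigma}) (n0 n1 : nat) (H : vlg) (V' : {set vst H}) : Prop :=
  V' != set0 /\
  forall u, u \in V' ->
    let s := induced_out_labels V' u in
    (Kplus S1 n0 n1 s (rr s) <= - `|Kminus S1 n0 n1 s (rr s)|)%R /\
    (forall l : nat, (1 <= l < rr s)%N -> (`|Kminus S1 n0 n1 s l| <= Kplus S1 n0 n1 s l)%R).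

End Defs.

From mathcomp Require Import all_boot all_order all_algebra.
From mathcomp Require Import ring zify.
From Stdlib Require Import Classical.
Set Implicit Arguments. Unset Strict Implicit. Unset Printing Implicit Defensive.
Import Order.TTheory GRing.Theory Num.Theory.

(* Only if: let E be a deterministic VLE of S and G a deterministic irreducible
   presentation of S.  Every word generated by E lies in S, so shrinking a set of
   states of G along words of E yields a state c0 of E and a state y0 of G from
   which every word generated at c0 can be read.  Build a VLG on the pairs (c, y)
   and the states of G: a pair follows the edges of E while reading their labels
   in G, leaves through "exit" edges labelled by the shortest words that are read
   in G but are prefix-incomparable with the labels of E, and G returns to
   (c0, y0) on reaching y0.  Every word of S is generated from every state, so a
   terminal strongly connected component presents S.  Its pair states are
   principal: a reachable pair (c, y) carries exactly the outgoing labels of c,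
   where (E3) makes K+ vanish at the maximal length and (E4) then forces K- = 0.

   If: keep the subgraph induced by the principal states and, at each state u,
   only some of its edges of maximal length r(u).  Since
   K±_(l+1) = (n0 ± n1) K±_l - (eta ± omega)_(l+1) and K+ - K- is even, the
   numbers of even and odd edges of length r(u) can be lowered so that K+ and K-
   both vanish at r(u).  This is (E3); (E4) is unchanged below r(u) and trivial
   above it, and a deterministic VLG is lossless. *)

Lemma count_map_enum_filter (T : finType) (A : Type) (f : T -> A) (q : pred T) (P : pred A) :
  count P [seq f x | x <- enum T & q x] = #|[pred x | q x && P (f x)]|.
Proof.
rewrite count_map count_filter enumT cardE /enum_mem -size_filter.
by congr size; apply: eq_filter => x; rewrite !inE andbC.
Qed.

Lemma card_sig_pred (T : finType) (k Q : pred T) :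
  #|[pred e : {x | k x} | Q (val e)]| = #|[pred x | k x && Q x]|.
Proof.
rewrite -(card_image val_inj); apply: eq_card => x; rewrite !inE.
apply/imageP/andP => [[y]|[kx qx]]; last by exists (exist _ x kx).
by rewrite inE => qy ->; split => //; apply: valP.
Qed.

Lemma prefix_or_of_cat_eq (T : eqType) (a b c d : seq T) :
  a ++ b = c ++ d -> prefix a c || prefix c a.
Proof.
move=> h; rewrite !prefixE; case: (leqP (size a) (size c)) => hs.
  have := congr1 (take (size a)) h; rewrite take_size_cat // takel_cat // => e.
  by rewrite -e eqxx.
have := congr1 (take (size c)) h.
by rewrite [in X in _ = X -> _]take_size_cat // takel_cat ?(ltnW hs) // => ->; rewrite eqxx orbT.
Qed.

Lemma pmap_Some_pad (T : Type) (s : seq T) n : pmap id (map Some s ++ nseq n None) = s.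
Proof. by elim: s => [|a s IH] /=; [elim: n | rewrite IH]. Qed.

Lemma exists_subset_card (T : finType) (A : {set T}) k :
  k <= #|A| -> exists2 B : {set T}, B \subset A & #|B| = k.
Proof.
elim: k => [|k IH] hk; first by exists set0; rewrite ?sub0set ?cards0.
have [B hBA hB] := IH (ltnW hk).
have /subsetPn[x hxA hxB] : ~~ (A \subset B) by apply/negP => /subset_leq_card; lia.
exists (x |: B); first by rewrite subUset sub1set hxA hBA.
by rewrite cardsU1 hxB hB.
Qed.

Lemma exists_terminal_vertex (T : finType) (R : rel T) (x0 : T) :
  exists2 v, connect R x0 v & forall w, connect R v w -> connect R w v.
Proof.
pose reach z := [set w | connect R z w].
case: (arg_minnP (fun z => #|reach z|) (connect0 R x0)) => v hv hmin.
exists v => // w hvw.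
have sub : reach w \subset reach v.
  by apply/subsetP => u; rewrite !inE; apply: connect_trans.
have /eqP same : reach w == reach v.
  by rewrite eqEcard sub hmin //; apply: connect_trans hvw.
have : v \in reach v by rewrite inE connect0.
by rewrite -same inE.
Qed.

Section VLGPaths.
Variables (Sigma : finType) (H : vlg Sigma).

Lemma vpath_cat (u : vst H) p q : vpath u (p ++ q) = vpath u p && vpath (vend u p) q.
Proof. by elim: p u => [|e p IH] u //=; rewrite IH andbA. Qed.

Lemma vword_cat (p q : seq (ved H)) : vword (p ++ q) = vword p ++ vword q.
Proof. by rewrite /vword map_cat flatten_cat. Qed.

Lemma vword_cons (e : ved H) p : vword (e :: p) = vlab e ++ vword p.
Proof. by []. Qed.

Lemma vdeterministic_lossless : vdeterministic H -> lossless H.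
Proof.
move=> hd u p q hp hq _; elim: p u q hp hq => [|e p IH] u [|e' q] //=.
- by rewrite vword_cons => _ _ /esym; case: (vlab e') (vlab_nonempty e').
- by rewrite vword_cons => _ _; case: (vlab e) (vlab_nonempty e).
move=> /andP[/eqP he hp] /andP[/eqP he' hq]; rewrite !vword_cons => hw.
have ee : e = e'.
  apply/eqP/negPn/negP => ne; have hs : vsrc e = vsrc e' by rewrite he he'.
  have := prefix_or_of_cat_eq hw.
  by rewrite (negbTE (hd _ _ ne hs)) (negbTE (hd _ _ _ (esym hs))) // eq_sym.
subst e'; congr cons; apply: (IH (vdst e)) => //.
by have := congr1 (drop (size (vlab e))) hw; rewrite !drop_size_cat.
Qed.

Definition vrel : rel (vst H) := fun x z => [exists e : ved H, (vsrc e == x) && (vdst e == z)].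

Lemma connect_vpath (x z : vst H) : connect vrel x z -> exists p, vpath x p /\ vend x p = z.
Proof.
case/connectP => s hs ->; elim: s x hs => [|y s IH] x /=; first by exists [::].
case/andP => /existsP [e /andP[/eqP h1 /eqP h2]] /IH [p [hp he]].
by exists (e :: p); rewrite /= h1 eqxx h2 hp; split => //; rewrite -he /vend /= h2.
Qed.

End VLGPaths.

(** * The numbers K+ and K- *)

Section KraftNumbers.
Local Open Scope ring_scope.

Lemma Kl0 mu (n : int) : Kl 0 mu n = 1.
Proof. by rewrite /Kl big_geq // subr0 expr0. Qed.

Lemma KlS l mu (n : int) : Kl l.+1 mu n = n * Kl l mu n - mu l.+1.
Proof.
rewrite /Kl big_nat_recr //= subnn expr0 mulr1.
rewrite (eq_big_nat _ _ (F2 := fun i => n * (mu i * n ^+ (l - i)))); last first.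
  by move=> i /andP[_ hi]; rewrite subSn // exprS; ring.
rewrite -mulr_sumr exprS; ring.
Qed.

Lemma eq_Kl l (mu mu' : nat -> int) n :
  (forall i, (0 < i <= l)%N -> mu i = mu' i) -> Kl l mu n = Kl l mu' n.
Proof.
move=> h; rewrite /Kl; congr (_ - _); apply: eq_big_nat => i /andP[h1 h2].
by rewrite h //; apply/andP; split; lia.
Qed.

(* Multiplying the Kraft sum by [n ^ N] turns [1 - sum] into [Kl N mu n]. *)
Lemma kraft_sum_eq1 (N n : nat) (mu : nat -> nat) : (0 < n)%N ->
  (\sum_(1 <= l < N.+1) ((mu l)%:R / n%:R ^+ l) = 1 :> rat) <->
  Kl N (fun i => (mu i)%:Z) n%:Z = 0.
Proof.
move=> hn; have hn0 : (n%:R : rat) != 0 by rewrite pnatr_eq0 -lt0n.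
have key : (Kl N (fun i => (mu i)%:Z) n%:Z)%:~R =
    n%:R ^+ N * (1 - \sum_(1 <= l < N.+1) ((mu l)%:R / n%:R ^+ l)) :> rat.
  rewrite /Kl rmorphB rmorphXn /= rmorph_sum /= mulrBr mulr1 mulr_sumr.
  congr (_ - _); apply: eq_big_nat => i /andP[_ hi].
  rewrite rmorphM rmorphXn /= -{2}(subnK (hi : (i <= N)%N)) exprD; field.
  by rewrite expf_neq0.
have -> : (Kl N (fun i => (mu i)%:Z) n%:Z = 0) <-> (Kl N (fun i => (mu i)%:Z) n%:Z == 0).
  by split => /eqP.
rewrite -(intr_eq0 rat) key mulf_eq0 expf_eq0 (negbTE hn0) andbF /= subr_eq0.
by split => [->|/eqP].
Qed.

Variables n0 n1 : nat.

Definition Kp (e o : nat -> nat) l := Kl l (fun i => (e i)%:Z + (o i)%:Z) (n0%:Z + n1%:Z).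
Definition Km (e o : nat -> nat) l := Kl l (fun i => (e i)%:Z - (o i)%:Z) (n0%:Z - n1%:Z).

Lemma KpS e o l : Kp e o l.+1 = (n0%:Z + n1%:Z) * Kp e o l - ((e l.+1)%:Z + (o l.+1)%:Z).
Proof. exact: KlS. Qed.

Lemma KmS e o l : Km e o l.+1 = (n0%:Z - n1%:Z) * Km e o l - ((e l.+1)%:Z - (o l.+1)%:Z).
Proof. exact: KlS. Qed.

Lemma eq_Kpm e o e' o' l :
  (forall i, (0 < i <= l)%N -> e i = e' i /\ o i = o' i) ->
  Kp e o l = Kp e' o' l /\ Km e o l = Km e' o' l.
Proof. by move=> h; split; apply: eq_Kl => i /h [-> ->]. Qed.

Lemma Kpm_parity e o l : exists j, Kp e o l = Km e o l + 2 * j.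
Proof.
elim: l => [|l [j hj]]; first by exists 0; rewrite /Kp /Km !Kl0; ring.
exists (n0%:Z * j + n1%:Z * (j + Km e o l) - (o l.+1)%:Z).
by rewrite KpS KmS hj; ring.
Qed.

Lemma Kpm_vanish e o r :
  (forall l, (r < l)%N -> e l = 0%N /\ o l = 0%N) -> Kp e o r = 0 -> Km e o r = 0 ->
  forall l, (r <= l)%N -> Kp e o l = 0 /\ Km e o l = 0.
Proof.
move=> hgt hp hm l /subnK <-; elim: (l - r)%N => [|d [IHp IHm]] //.
rewrite addSn KpS KmS IHp IHm.
have [-> ->] : e (d + r).+1 = 0%N /\ o (d + r).+1 = 0%N by apply: hgt; lia.
by rewrite !mulr0 subr0.
Qed.

(* The witnesses are [h = (n0 (P + M) + n1 (P - M)) / 2] and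
   [g = (n0 (P - M) + n1 (P + M)) / 2]. *)
Lemma exists_top_level_counts (P M j : int) (E O : nat) :
  `|M| <= P -> P = M + 2 * j ->
  (n0%:Z + n1%:Z) * P - (E%:Z + O%:Z) <= - `|(n0%:Z - n1%:Z) * M - (E%:Z - O%:Z)| ->
  exists h g : nat, [/\ (h <= E)%N, (g <= O)%N,
    (n0%:Z + n1%:Z) * P = h%:Z + g%:Z & (n0%:Z - n1%:Z) * M = h%:Z - g%:Z].
Proof.
move=> hPM hj hK.
have hM1 : M <= P by apply: le_trans hPM; apply: ler_norm.
have hM2 : - M <= P by apply: le_trans hPM; rewrite -normrN; apply: ler_norm.
have hK1 : (n0%:Z + n1%:Z) * P - (E%:Z + O%:Z) <= - ((n0%:Z - n1%:Z) * M - (E%:Z - O%:Z)).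
  by apply: le_trans hK _; rewrite lerN2; apply: ler_norm.
have hK2 : (n0%:Z + n1%:Z) * P - (E%:Z + O%:Z) <= (n0%:Z - n1%:Z) * M - (E%:Z - O%:Z).
  by apply: le_trans hK _; rewrite -normrN lerNl; apply: ler_norm.
set h := n0%:Z * M + (n0%:Z + n1%:Z) * j.
set g := n0%:Z * j + n1%:Z * M + n1%:Z * j.
have h0 : 0 <= h by rewrite /h; nia.
have g0 : 0 <= g by rewrite /g; nia.
exists `|h|%N, `|g|%N; rewrite !abszE !ger0_norm //; split.
- by rewrite -lez_nat abszE ger0_norm // /h; nia.
- by rewrite -lez_nat abszE ger0_norm // /g; nia.
- by rewrite /h /g hj; ring.
- by rewrite /h /g; ring.
Qed.

Lemma principal_truncation (e o : nat -> nat) (r : nat) :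
  (forall l, (1 <= l < r)%N -> `|Km e o l| <= Kp e o l) ->
  Kp e o r <= - `|Km e o r| ->
  exists e' o' : nat -> nat,
    [/\ forall l, (l < r)%N -> e' l = e l /\ o' l = o l,
        (e' r <= e r)%N /\ (o' r <= o r)%N,
        forall l, (r < l)%N -> e' l = 0%N /\ o' l = 0%N,
        forall l, (1 <= l)%N -> `|Km e' o' l| <= Kp e' o' l &
        Kp e' o' r = 0].
Proof.
case: r => [|r] hbelow htop; first by move: htop; rewrite /Kp /Km !Kl0 normr1.
have hPM : `|Km e o r| <= Kp e o r.
  case: r {htop} hbelow => [|r] h; first by rewrite /Kp /Km !Kl0 normr1.
  by apply: h; rewrite /= ltnSn.
have [j hj] := Kpm_parity e o r.
rewrite KpS KmS in htop.
have [h [g [heh hgo hP hM]]] := exists_top_level_counts hPM hj htop.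
pose e' l := if (l <= r)%N then e l else if l == r.+1 then h else 0%N.
pose o' l := if (l <= r)%N then o l else if l == r.+1 then g else 0%N.
have hlow : forall l, (l < r.+1)%N -> e' l = e l /\ o' l = o l.
  by move=> l hl; rewrite /e' /o' (hl : (l <= r)%N).
have hhigh : forall l, (r.+1 < l)%N -> e' l = 0%N /\ o' l = 0%N.
  by move=> l hl; rewrite /e' /o' ifF ?ifF //; lia.
have [hKp hKm] : Kp e' o' r = Kp e o r /\ Km e' o' r = Km e o r.
  by apply: eq_Kpm => i hi; apply: hlow; lia.
have [hp0 hm0] : Kp e' o' r.+1 = 0 /\ Km e' o' r.+1 = 0.
  rewrite KpS KmS hKp hKm hP hM /e' /o' ltnn eqxx; split; ring.
exists e', o'; split => //.
- by rewrite /e' /o' ltnn eqxx.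
move=> l hl; case: (ltnP l r.+1) => hlr.
  have [-> ->] : Kp e' o' l = Kp e o l /\ Km e' o' l = Km e o l.
    by apply: eq_Kpm => i hi; apply: hlow; lia.
  by apply: hbelow; lia.
by have [-> ->] := Kpm_vanish hhigh hp0 hm0 hlr; rewrite normr0.
Qed.

End KraftNumbers.

Section LabelLists.
Variables (Sigma : finType) (S1 : {set Sigma}) (n0 n1 : nat).
Hypothesis n_gt0 : (0 < n0 + n1)%N.
Implicit Types (s : seq (seq Sigma)) (w : seq Sigma).
Local Open Scope ring_scope.

Definition kraft_eq1 s :=
  \sum_(1 <= l < (rr s).+1) ((eta_of S1 s l + omega_of S1 s l)%:R / (n0 + n1)%:R ^+ l) = 1 :> rat.

Lemma size_le_rr s w : w \in s -> (size w <= rr s)%N.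
Proof. by move=> hw; apply: leq_bigmax_seq. Qed.

Lemma eta_omega_gt_rr s l : (rr s < l)%N -> eta_of S1 s l = 0%N /\ omega_of S1 s l = 0%N.
Proof.
move=> hl; suff zero (Q : pred (seq Sigma)) : count (fun w => (size w == l) && Q w) s = 0%N.
  by rewrite /eta_of /omega_of !zero.
apply/eqP; rewrite -leqn0 leqNgt -has_count; apply/hasPn => w /size_le_rr hw.
by apply/negP => /andP[/eqP hs _]; move: hw; rewrite hs leqNgt hl.
Qed.

Lemma kraft_eq1_Kplus s N : (rr s <= N)%N -> kraft_eq1 s <-> Kplus S1 n0 n1 s N = 0.
Proof.
move=> hN; pose F l := ((eta_of S1 s l + omega_of S1 s l)%:R / (n0 + n1)%:R ^+ l : rat).
have trunc : \sum_(1 <= l < N.+1) F l = \sum_(1 <= l < (rr s).+1) F l.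
  rewrite (@big_cat_nat _ _ _ (rr s).+1) ?ltnS //= [X in _ + X]big1_seq ?addr0 //.
  move=> l /andP[_]; rewrite mem_index_iota => /andP[hl _].
  by rewrite /F; have [-> ->] := eta_omega_gt_rr hl; rewrite mul0r.
have -> : kraft_eq1 s <-> \sum_(1 <= l < N.+1) F l = 1 by rewrite trunc.
apply: iff_trans (kraft_sum_eq1 _ _ n_gt0) _.
suff -> : Kl N (fun i => (eta_of S1 s i + omega_of S1 s i)%N%:Z) (n0 + n1)%N%:Z
          = Kplus S1 n0 n1 s N by [].
by rewrite PoszD; apply: eq_Kl => i _; rewrite PoszD.
Qed.

Lemma kraft_eq1_rr_gt0 s : kraft_eq1 s -> (0 < rr s)%N.
Proof.
rewrite /kraft_eq1; case: (rr s) => [|//].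
by rewrite big_geq // => /eqP; rewrite eq_sym oner_eq0.
Qed.

Lemma kraft_eq1_neq_nil s : kraft_eq1 s -> s != [::].
Proof. by move/kraft_eq1_rr_gt0; case: s => //; rewrite /rr big_nil. Qed.

Lemma principal_of_VLE_state s :
  kraft_eq1 s -> (forall l, (1 <= l)%N -> `|Kminus S1 n0 n1 s l| <= Kplus S1 n0 n1 s l) ->
  Kplus S1 n0 n1 s (rr s) <= - `|Kminus S1 n0 n1 s (rr s)| /\
  (forall l, (1 <= l < rr s)%N -> `|Kminus S1 n0 n1 s l| <= Kplus S1 n0 n1 s l).
Proof.
move=> hE3 hE4; split; last by move=> l /andP[hl _]; apply: hE4.
have hK := (kraft_eq1_Kplus (leqnn _)).1 hE3.
have := hE4 _ (kraft_eq1_rr_gt0 hE3); rewrite hK normr_le0 => /eqP ->.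
by rewrite normr0 oppr0.
Qed.

Lemma perm_rr_Kpm s s' : perm_eq s s' ->
  [/\ rr s = rr s', forall l, Kplus S1 n0 n1 s l = Kplus S1 n0 n1 s' l &
      forall l, Kminus S1 n0 n1 s l = Kminus S1 n0 n1 s' l].
Proof.
move=> hp; split => [|l|l]; first exact: perm_big.
all: by apply: eq_Kl => i _; rewrite /eta_of /omega_of !(permP hp).
Qed.

End LabelLists.

Section InducedSubgraph.
Variables (Sigma : finType) (H : vlg Sigma) (V : {set vst H}) (sel : pred (ved H)).
Hypothesis V_neq0 : V != set0.

Definition kept (e : ved H) := [&& vsrc e \in V, vdst e \in V & sel e].

Definition sub_st := {x : vst H | x \in V}.
Definition sub_ed := {e : ved H | kept e}.

Lemma kept_src e : kept e -> vsrc e \in V. Proof. by case/and3P. Qed.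
Lemma kept_dst e : kept e -> vdst e \in V. Proof. by case/and3P. Qed.

Definition sub_src (e : sub_ed) : sub_st := exist _ (vsrc (val e)) (kept_src (valP e)).
Definition sub_dst (e : sub_ed) : sub_st := exist _ (vdst (val e)) (kept_dst (valP e)).
Definition sub_lab (e : sub_ed) := vlab (val e).

Lemma sub_lab_neq0 e : sub_lab e != [::]. Proof. exact: vlab_nonempty. Qed.

Lemma sub_st_card_gt0 : 0 < #|{: sub_st}|.
Proof. by rewrite card_sig (@eq_card _ _ (mem V)) ?card_gt0. Qed.

Definition subvlg : vlg Sigma :=
  @VLG Sigma sub_st sub_ed sub_src sub_dst sub_lab sub_lab_neq0 sub_st_card_gt0.

Lemma vpath_subvlg (u : sub_st) (p : seq sub_ed) :
  @vpath _ subvlg u p -> vpath (val u) (map val p).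
Proof.
by elim: p u => [|e p IH] u //= /andP[/eqP <- /IH]; rewrite eqxx.
Qed.

Lemma vword_subvlg (p : seq sub_ed) : @vword _ subvlg p = vword (map val p).
Proof. by rewrite /vword -map_comp. Qed.

Lemma subvlg_det : vdeterministic H -> vdeterministic subvlg.
Proof.
move=> hd e e' ne /(congr1 val); apply: hd.
by apply: contra ne => /eqP h; apply/eqP/val_inj.
Qed.

Lemma inSH_subvlg w : inSH subvlg w -> inSH H w.
Proof.
case=> u [p [hp hw]]; exists (val u), (map val p).
by rewrite -vword_subvlg; split => //; apply: vpath_subvlg.
Qed.

Lemma subvlg_max_len r : max_len H r -> max_len subvlg r.
Proof. by move=> h e; apply: h. Qed.

Lemma count_out_labels_subvlg (x : sub_st) (P : pred (seq Sigma)) :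
  count P (@out_labels _ subvlg x) =
  #|[pred e | kept e && ((vsrc e == val x) && P (vlab e))]|.
Proof.
rewrite /out_labels count_map_enum_filter.
rewrite -(card_sig_pred kept (fun e => (vsrc e == val x) && P (vlab e))).
by apply: eq_card => e; rewrite !inE /= -val_eqE.
Qed.

Lemma lift_vpath_subvlg (u : sub_st) (p : seq (ved H)) :
  (forall e, vsrc e \in V -> kept e) -> vpath (val u) p ->
  exists q : seq sub_ed,
    [/\ @vpath _ subvlg u q, map val q = p & val (@vend _ subvlg u q) = vend (val u) p].
Proof.
move=> hclosed; elim: p u => [|e p IH] u /=; first by exists [::].
case/andP => /eqP hs hp.
have he : kept e by apply: hclosed; rewrite hs (valP u).
have [q [hq <- hv]] := IH (sub_dst (exist _ e he)) hp.
exists (exist _ e he :: q); split => //=.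
by rewrite hq andbT; apply/eqP/val_inj.
Qed.

End InducedSubgraph.

(** * From principal states to a VLE *)

Section Pruning.
Variables (Sigma : finType) (S : seq Sigma -> Prop) (S1 : {set Sigma}) (n0 n1 : nat).
Variables (H : vlg Sigma) (V : {set vst H}).
Hypothesis n_gt0 : (0 < n0 + n1)%N.
Hypothesis V_principal : principal_states S1 n0 n1 V.
Local Open Scope ring_scope.

Let V_neq0 : V != set0 := V_principal.1.
Local Notation inner u e := [&& vsrc e == u, vsrc e \in V & vdst e \in V].
Local Notation sl u := (induced_out_labels V u).
Local Notation top_edges u := [set e | inner u e && (size (vlab e) == rr (sl u))].
Local Notation even_edges := [set e : ved H | ~~ odd_word S1 (vlab e)].
Local Notation odd_edges := [set e : ved H | odd_word S1 (vlab e)].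

Lemma count_induced_out_labels u (P : pred (seq Sigma)) :
  count P (sl u) = #|[pred e | inner u e && P (vlab e)]|.
Proof. exact: count_map_enum_filter. Qed.

(* [B] is the set of edges of maximal length kept at [u]; [e'] and [o'] are the
   resulting numbers of even and odd edges of each length. *)
Definition pruning u (t : (nat -> nat) * (nat -> nat) * {set ved H}) : Prop :=
  let: (e', o', B) := t in
  [/\ forall l, (l < rr (sl u))%N -> e' l = eta_of S1 (sl u) l /\ o' l = omega_of S1 (sl u) l,
      forall l, (rr (sl u) < l)%N -> e' l = 0%N /\ o' l = 0%N,
      forall l, (1 <= l)%N -> `|Km n0 n1 e' o' l| <= Kp n0 n1 e' o' l,
      Kp n0 n1 e' o' (rr (sl u)) = 0 &
      [/\ B \subset top_edges u, #|B :&: even_edges| = e' (rr (sl u)) &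
          #|B :&: odd_edges| = o' (rr (sl u))]].

Lemma exists_pruning u : u \in V -> exists t, pruning u t.
Proof.
move=> hu; have [htop hbelow] := V_principal.2 u hu.
have [e' [o' [hlt [her hor] hgt hE4 hK0]]] := principal_truncation hbelow htop.
set ru := rr (sl u) in hlt her hor hgt hE4 hK0 *.
have [Be hBe hBe'] :
    exists2 B : {set ved H}, B \subset top_edges u :&: even_edges & #|B| = e' ru.
  apply: exists_subset_card; apply: leq_trans her _; rewrite /eta_of count_induced_out_labels.
  by apply/subset_leq_card/subsetP => e; rewrite !inE andbA.
have [Bo hBo hBo'] :
    exists2 B : {set ved H}, B \subset top_edges u :&: odd_edges & #|B| = o' ru.
  apply: exists_subset_card; apply: leq_trans hor _; rewrite /omega_of count_induced_out_labels.
  by apply/subset_leq_card/subsetP => e; rewrite !inE andbA.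
exists (e', o', Be :|: Bo); split => //; split.
- rewrite subUset; apply/andP.
  by split; [apply: subset_trans hBe _ | apply: subset_trans hBo _]; apply: subsetIl.
- rewrite -hBe'; apply: eq_card => e; rewrite !inE.
  move: (subsetP hBe e) (subsetP hBo e); rewrite !inE => /implyP + /implyP.
  by case: (e \in Be) (e \in Bo) (odd_word S1 (vlab e)) => [] [] []; rewrite ?andbF ?andbT.
- rewrite -hBo'; apply: eq_card => e; rewrite !inE.
  move: (subsetP hBe e) (subsetP hBo e); rewrite !inE => /implyP + /implyP.
  by case: (e \in Be) (e \in Bo) (odd_word S1 (vlab e)) => [] [] []; rewrite ?andbF ?andbT.
Qed.

Section PrunedGraph.
Variable choice : vst H -> (nat -> nat) * (nat -> nat) * {set ved H}.
Hypothesis choice_pruning : forall u, u \in V -> pruning u (choice u).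

Definition pruned_sel e := (size (vlab e) < rr (sl (vsrc e)))%N || (e \in (choice (vsrc e)).2).
Let E := subvlg pruned_sel V_neq0.

Lemma count_pruned_out_labels (x : sub_st V) e' o' B l (Q : pred (seq Sigma)) :
  choice (val x) = (e', o', B) -> (1 <= l)%N ->
  count (fun w => (size w == l) && Q w) (@out_labels _ E x) =
  if (l < rr (sl (val x)))%N then count (fun w => (size w == l) && Q w) (sl (val x))
  else if l == rr (sl (val x)) then #|B :&: [set e | Q (vlab e)]| else 0%N.
Proof.
case: x => u hu /= hch hl1; rewrite count_out_labels_subvlg /=.
have [_ _ _ _ [hsub _ _]] : pruning u (e', o', B) by rewrite -hch; apply: choice_pruning.
case: (ltngtP l (rr (sl u))) => hl.
- rewrite count_induced_out_labels; apply: eq_card => e; rewrite !inE /kept /pruned_sel.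
  case: (eqVneq (vsrc e) u) => [hs|]; last by rewrite !andbF.
  case: (eqVneq (size (vlab e)) l) => [hz|]; last by rewrite !andbF.
  by rewrite hs hu hz hl /= !andbT.
- apply: eq_card0 => e; rewrite !inE /kept /pruned_sel.
  apply/negP => /andP[/and3P[h1 h2 _] /andP[/eqP hs /andP[/eqP hz _]]].
  have : vlab e \in sl u by apply: map_f; rewrite mem_filter mem_enum -hs h1 h2 eqxx.
  by move/size_le_rr; rewrite hz; lia.
- apply: eq_card => e; rewrite !inE /kept /pruned_sel.
  case: (boolP (e \in B)) => hB /=.
    have := subsetP hsub e hB; rewrite !inE => /andP[/and3P[/eqP hs h1 h2] /eqP hz].
    by rewrite h1 h2 hs hz hl hch hB orbT /= !eqxx.
  case: (eqVneq (vsrc e) u) => [hs|]; last by rewrite !andbF.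
  case: (eqVneq (size (vlab e)) l) => [hz|]; last by rewrite !andbF.
  by rewrite hs hz hch (negbTE hB) hl ltnn /= !andbF.
Qed.

Lemma eta_omega_pruned (x : sub_st V) e' o' B l :
  choice (val x) = (e', o', B) -> (1 <= l)%N ->
  eta_of S1 (@out_labels _ E x) l = e' l /\ omega_of S1 (@out_labels _ E x) l = o' l.
Proof.
move=> hch hl1; have := choice_pruning (valP x); rewrite hch.
case=> hlt hgt _ _ [_ hBe hBo].
rewrite /eta_of /omega_of !(count_pruned_out_labels _ hch hl1).
case: (ltngtP l (rr (sl (val x)))) => hl.
- by have [-> ->] := hlt l hl.
- by have [-> ->] := hgt l hl.
- by rewrite hl -hBe -hBo.
Qed.

Lemma rr_pruned_le (x : sub_st V) : (rr (@out_labels _ E x) <= rr (sl (val x)))%N.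
Proof.
apply/bigmax_leqP_seq => _ /mapP[e + ->] _; rewrite mem_filter => /andP[/eqP hs _].
apply: size_le_rr; apply: map_f; rewrite mem_filter mem_enum -hs /=.
by case/and3P: (valP e) => -> -> _; rewrite eqxx.
Qed.

Lemma pruned_VLE_state (x : sub_st V) : let s := @out_labels _ E x in
  kraft_eq1 S1 n0 n1 s /\ (forall l, (1 <= l)%N -> `|Kminus S1 n0 n1 s l| <= Kplus S1 n0 n1 s l).
Proof.
case hch: (choice (val x)) => [[e' o'] B].
have [_ _ hE4 hK0 _] : pruning (val x) (e', o', B) by rewrite -hch; apply/choice_pruning/valP.
have hKpm l : Kplus S1 n0 n1 (@out_labels _ E x) l = Kp n0 n1 e' o' l /\
              Kminus S1 n0 n1 (@out_labels _ E x) l = Km n0 n1 e' o' l.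
  by apply: eq_Kpm => i /andP[hi _]; apply: eta_omega_pruned hch hi.
split => [|l hl]; last by have [-> ->] := hKpm l; apply: hE4.
by apply/(kraft_eq1_Kplus _ n_gt0 (rr_pruned_le x)); have [-> _] := hKpm (rr (sl (val x))).
Qed.

End PrunedGraph.

Lemma VLE_of_principal_states r :
  vdeterministic H -> vpresents H S -> max_len H r ->
  exists E : vlg Sigma, [/\ vdeterministic E, is_VLE S S1 n0 n1 E & max_len E r].
Proof.
move=> hd hp hm.
have [choice hchoice] : exists choice, forall u, u \in V -> pruning u (choice u).
  apply: (@fin_all_exists _ _ (fun u t => u \in V -> pruning u t)) => u.
  case: (boolP (u \in V)) => hu; last by exists (fun _ => 0%N, fun _ => 0%N, set0).
  by have [t ht] := exists_pruning hu; exists t.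
exists (subvlg (pruned_sel choice) V_neq0); split.
- exact: subvlg_det.
- split; last exact: pruned_VLE_state.
  + exact/vdeterministic_lossless/subvlg_det.
  + by move=> w /inSH_subvlg /(hp w).2.
- exact: subvlg_max_len.
Qed.

End Pruning.

(** * From a VLE to principal states *)

Section DeterministicReading.
Variables (Sigma : finType) (G : lgraph Sigma).
Hypothesis G_det : gdeterministic G.

Definition gstep (g : gst G) (a : Sigma) : option (gst G) :=
  omap (@gdst _ G) [pick f | (gsrc f == g) && (glab f == a)].

Fixpoint gread (g : gst G) (w : seq Sigma) : option (gst G) :=
  if w is a :: w' then (if gstep g a is Some g' then gread g' w' else None) else Some g.

Lemma gread_cat g w1 w2 : gread g (w1 ++ w2) = obind (gread^~ w2) (gread g w1).
Proof. by elim: w1 g => [|a w1 IH] g //=; case: (gstep g a). Qed.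

Lemma gstep_edge (f : ged G) : gstep (gsrc f) (glab f) = Some (gdst f).
Proof.
rewrite /gstep; case: pickP => [f' /andP[/eqP hs /eqP hl]|/(_ f)]; last by rewrite !eqxx.
by case: (eqVneq f' f) => [->//|/G_det/(_ hs)].
Qed.

Lemma gstep_Some g a g' : gstep g a = Some g' ->
  exists f : ged G, [/\ gsrc f = g, glab f = a & gdst f = g'].
Proof.
by rewrite /gstep; case: pickP => [f /andP[/eqP hs /eqP hl] [<-]|//]; exists f.
Qed.

Lemma gread_gpath g p : gpath g p -> gread g (map (@glab _ G) p) = Some (gend g p).
Proof.
by elim: p g => [|f p IH] g //= /andP[/eqP <- /IH]; rewrite gstep_edge.
Qed.

Lemma gread_Some_gpath g w g' : gread g w = Some g' ->
  exists p, [/\ gpath g p, map (@glab _ G) p = w & gend g p = g'].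
Proof.
elim: w g => [|a w IH] g /=; first by move=> [<-]; exists [::].
case hs: (gstep g a) => [g1|//] /IH [p [hp hw he]].
have [f [h1 h2 h3]] := gstep_Some hs.
by exists (f :: p); split => /=; rewrite ?h1 ?eqxx ?h2 ?hw // /gend /= h3.
Qed.

Lemma gread_infix g W g' w : gread g W = Some g' -> infix w W ->
  exists g1 p, gpath g1 p /\ w = map (@glab _ G) p.
Proof.
move=> hr /infixP[a [b hW]]; move: hr; rewrite hW !gread_cat; case: (gread g a) => [g1|//] /=.
rewrite gread_cat; case hw: (gread g1 w) => [g2|//] _.
by have [p [hp <- _]] := gread_Some_gpath hw; exists g1, p.
Qed.

End DeterministicReading.

Section TrackingPair.
Variables (Sigma : finType) (G : lgraph Sigma) (E : vlg Sigma).
Hypothesis G_det : gdeterministic G.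

Definition tracks (c : vst E) (y : gst G) :=
  forall p, vpath c p -> gread y (vword p) != None.

Definition greads (Y : {set gst G}) w := [set y' | [exists y in Y, gread y w == Some y']].

Lemma greads_nil Y : greads Y [::] = Y.
Proof.
apply/setP => z; rewrite !inE; apply/existsP/idP => [[y /andP[hy /eqP [<-]]] //|hz].
by exists z; rewrite hz eqxx.
Qed.

Lemma greads_cat Y w1 w2 : greads (greads Y w1) w2 = greads Y (w1 ++ w2).
Proof.
apply/setP => z; rewrite !inE; apply/existsP/existsP.
  case=> y' /andP[]; rewrite inE => /existsP[y /andP[hy /eqP h1]] /eqP h2.
  by exists y; rewrite hy gread_cat h1 /= h2 eqxx.
case=> y /andP[hy]; rewrite gread_cat; case h1: (gread y w1) => [y'|//] /= /eqP h2.
by exists y'; rewrite inE h2 eqxx andbT; apply/existsP; exists y; rewrite hy h1 eqxx.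
Qed.

Lemma card_greads_lt (Y : {set gst G}) w y :
  y \in Y -> gread y w = None -> #|greads Y w| < #|Y|.
Proof.
move=> hy hn; pose Yw := [set z in Y | gread z w != None].
apply: (@leq_ltn_trans #|Yw|).
  apply: leq_trans (leq_imset_card (fun z => odflt z (gread z w)) Yw).
  apply/subset_leq_card/subsetP => z; rewrite inE => /existsP[z' /andP[hz' /eqP hr]].
  by apply/imsetP; exists z'; rewrite ?inE ?hz' ?hr.
apply/proper_card/properP; split; first by apply/subsetP => z; rewrite inE => /andP[].
by exists y; rewrite // inE hn eqxx andbF.
Qed.

(* If no state of [Y] tracks [c], some path from [c] kills a state of [Y];
   move to its end and shrink [Y] accordingly. *)
Lemma exists_tracks_in (c : vst E) (Y : {set gst G}) :
  (forall p, vpath c p -> greads Y (vword p) != set0) -> exists c0 y0, tracks c0 y0.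
Proof.
move: {2}#|Y| (leqnn #|Y|) => k; elim: k c Y => [|k IH] c Y hk hY.
  by have := hY [::] isT; rewrite greads_nil -card_gt0; lia.
have /set0Pn [y0 hy0] : Y != set0 by have := hY [::] isT; rewrite greads_nil.
case: (classic (exists y, y \in Y /\ tracks c y)) => [[y [_ hy]]|none]; first by exists c, y.
have [p hp [y [hy hn]]] : exists2 p, vpath c p & exists y, y \in Y /\ gread y (vword p) = None.
  apply: NNPP => no; apply: none; exists y0; split => // p hp; apply/negP => /eqP hn.
  by apply: no; exists p => //; exists y0.
apply: (IH (vend c p) (greads Y (vword p))).
  by have := card_greads_lt hy hn; lia.
by move=> q hq; rewrite greads_cat -vword_cat; apply: hY; rewrite vpath_cat hp hq.
Qed.

Lemma exists_tracks (S : seq Sigma -> Prop) :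
  gpresents G S -> (forall w, inSH E w -> S w) -> exists c0 y0, tracks c0 y0.
Proof.
move=> hGp hE2; have /card_gt0P [c1 _] := vst_nonempty E.
apply: (@exists_tracks_in c1 setT) => p hp.
have [|g [q [hq hw]]] := (hGp (vword p)).1.
  by apply: hE2; exists c1, p; split => //; apply: infix_refl.
apply/set0Pn; exists (gend g q); rewrite inE; apply/existsP; exists g.
by rewrite in_setT hw (gread_gpath G_det hq) eqxx.
Qed.

Lemma tracks_edge c y e : tracks c y -> vsrc e = c ->
  exists y', gread y (vlab e) = Some y' /\ tracks (vdst e) y'.
Proof.
move=> hI he; have := hI [:: e]; rewrite /= he eqxx /vword /= cats0 => /(_ isT).
case hr: (gread y (vlab e)) => [y'|//] _; exists y'; split => // q hq.
by have := hI (e :: q); rewrite /= he eqxx hq vword_cons gread_cat hr => /(_ isT).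
Qed.

End TrackingPair.

Section ProductGraph.
Variables (Sigma : finType) (G : lgraph Sigma) (E : vlg Sigma) (r : nat).
Variables (c0 : vst E) (y0 : gst G).
Hypotheses (G_det : gdeterministic G) (E_det : vdeterministic E).
Hypotheses (E_max_len : max_len E r) (r_gt0 : (0 < r)%N).

Definition pstate := ((vst E * gst G) + gst G)%type.

Definition gstate_of (z : pstate) : gst G := match z with inl (_, y) => y | inr g => g end.

Definition live_labels (c : vst E) (y : gst G) : seq (seq Sigma) :=
  [seq vlab e | e <- enum (ved E) & (vsrc e == c) && (gread y (vlab e) != None)].

(* Exit words have length at most [r]; they are stored as [r]-tuples padded with
   [None] so that the edges of the product graph form a finite type. *)
Definition untuple (t : r.-tuple (option Sigma)) : seq Sigma := pmap id t.
Definition padded (t : r.-tuple (option Sigma)) : bool :=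
  val t == map Some (untuple t) ++ nseq (r - size (untuple t)) None.

(* The last conjunct makes [x] minimal: without its last letter it is a prefix
   of a live label. *)
Definition exit_word c y (x : seq Sigma) : bool :=
  [&& x != [::], gread y x != None,
      all (fun l => ~~ prefix l x && ~~ prefix x l) (live_labels c y) &
      (size x == 1) || has (fun l => prefix (take (size x).-1 x) l) (live_labels c y)].

Definition pedge_raw :=
  ((ved E * gst G) + ((vst E * gst G) * r.-tuple (option Sigma)) + ged G)%type.

Definition pedge_valid (x : pedge_raw) : bool :=
  match x with
  | inl (inl (e, y)) => gread y (vlab e) != None
  | inl (inr ((c, y), t)) => padded t && exit_word c y (untuple t)
  | inr f => true
  end.

Definition pedge := {x : pedge_raw | pedge_valid x}.

Definition psrc (x : pedge) : pstate :=
  match val x with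
  | inl (inl (e, y)) => inl (vsrc e, y)
  | inl (inr ((c, y), _)) => inl (c, y)
  | inr f => inr (gsrc f)
  end.

Definition pdst (x : pedge) : pstate :=
  match val x with
  | inl (inl (e, y)) => inl (vdst e, odflt y (gread y (vlab e)))
  | inl (inr ((c, y), t)) => inr (odflt y (gread y (untuple t)))
  | inr f => if gdst f == y0 then inl (c0, y0) else inr (gdst f)
  end.

Definition plab (x : pedge) : seq Sigma :=
  match val x with
  | inl (inl (e, _)) => vlab e
  | inl (inr (_, t)) => untuple t
  | inr f => [:: glab f]
  end.

Lemma plab_neq0 x : plab x != [::].
Proof.
case: x => [[[[e y]|[[c y] t]]|f] /= hx]; rewrite /plab //=; first exact: vlab_nonempty.
by case/andP: hx => _ /and4P[].
Qed.

Lemma pstate_card_gt0 : (0 < #|{: pstate}|)%N.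
Proof. by apply/card_gt0P; exists (inl (c0, y0)). Qed.

Definition prodvlg : vlg Sigma :=
  @VLG Sigma pstate pedge psrc pdst plab plab_neq0 pstate_card_gt0.

Lemma gread_pedge (x : ved prodvlg) :
  gread (gstate_of (vsrc x)) (vlab x) = Some (gstate_of (vdst x)).
Proof.
case: x => [[[[e y]|[[c y] t]]|f] /= hx]; rewrite /psrc /pdst /plab /=.
- by move: hx; case: (gread y (vlab e)).
- by case/andP: hx => _ /and4P[_ +]; case: (gread y (untuple t)).
- by rewrite (gstep_edge G_det); case: eqP => [->|].
Qed.

Lemma gread_ppath (z : vst prodvlg) p :
  vpath z p -> gread (gstate_of z) (vword p) = Some (gstate_of (vend z p)).
Proof.
elim: p z => [|x p IH] z //= /andP[/eqP <- /IH hp].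
by rewrite vword_cons gread_cat gread_pedge.
Qed.

Lemma prodvlg_max_len : max_len prodvlg r.
Proof.
case=> [[[[e y]|[[c y] t]]|f] hx]; rewrite /plab /=; [exact: E_max_len | | exact: r_gt0].
by rewrite size_pmap; apply: leq_trans (count_size _ _) _; rewrite size_tuple.
Qed.

Lemma live_labelsP c y l :
  reflect (exists2 e, [/\ vsrc e = c & gread y (vlab e) != None] & l = vlab e)
          (l \in live_labels c y).
Proof.
apply: (iffP mapP) => [[e]|[e [hs hr] ->]].
  by rewrite mem_filter mem_enum andbT => /andP[/eqP hs hr] ->; exists e.
by exists e; rewrite // mem_filter mem_enum hs eqxx hr.
Qed.

Lemma exit_word_prefix_free c y x x' :
  exit_word c y x -> exit_word c y x' -> prefix x x' -> x = x'.
Proof.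
case/and4P=> hx _ /allP hall _ /and4P[_ _ _ hpar'] hp.
apply/eqP; apply: contraT => hne.
have hsz : (size x < size x')%N.
  rewrite ltn_neqAle size_prefix // andbT; apply: contra hne => /eqP hz.
  by move: hp; rewrite prefixE hz take_size eq_sym.
have hx0 : (0 < size x)%N by rewrite lt0n size_eq0.
move: hpar'; have -> /= : (size x' == 1) = false by apply/negP => /eqP; lia.
case/hasP => l hl hpl; have /andP[_ /negP hn] := hall l hl; exfalso; apply: hn.
apply: prefix_trans hpl; move: hp; rewrite !prefixE take_takel //.
by rewrite -ltnS (ltn_predK hsz).
Qed.

Lemma untuple_inj t t' : padded t -> padded t' -> untuple t = untuple t' -> t = t'.
Proof. by move=> /eqP h /eqP h' e; apply: val_inj; rewrite h h' e. Qed.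

Lemma exit_word_live c y x e : exit_word c y x -> vsrc e = c -> gread y (vlab e) != None ->
  ~~ prefix (vlab e) x && ~~ prefix x (vlab e).
Proof. by case/and4P=> _ _ /allP hall _ hs hr; apply/hall/live_labelsP; exists e. Qed.

Lemma prodvlg_det : vdeterministic prodvlg.
Proof.
case=> [[[[e y]|[[c y] t]]|f] hx]; case=> [[[[e' y']|[[c' y'] t']]|f'] hx'] //=;
  rewrite /psrc /plab /= => ne.
- case=> hs hy; subst y'; apply: E_det hs; apply: contra ne => /eqP ee; subst e'.
  exact/eqP/val_inj.
- case=> hs hy; subst.
  by have /andP[_ /exit_word_live/(_ (erefl _) hx)/andP[]] := hx'.
- case=> hs hy; subst.
  by have /andP[_ /exit_word_live/(_ (erefl _) hx')/andP[]] := hx.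
- case=> hs hy; subst; have /andP[pt hxt] := hx; have /andP[pt' hxt'] := hx'.
  apply/negP => hp.
  move/negP: ne; apply; apply/eqP/val_inj => /=.
  by rewrite (untuple_inj pt pt' (exit_word_prefix_free hxt hxt' hp)).
- case=> hs; rewrite andbT; apply/eqP; apply: G_det hs.
  by apply: contra ne => /eqP ee; subst f'; apply/eqP/val_inj.
Qed.

(* The exit word is the shortest prefix of [W] that no live label extends. *)
Lemma exists_exit_prefix (c : vst E) (y : gst G) (W : seq Sigma) :
  W != [::] -> gread y W != None -> ~~ has (fun l => prefix l W) (live_labels c y) ->
  ~~ has (fun l => prefix W l) (live_labels c y) ->
  exists2 x, prefix x W & exit_word c y x && (size x <= r)%N.
Proof.
move=> hW0 hW hshort hlong.
pose P k := (0 < k)%N && ~~ has (fun l => prefix (take k W) l) (live_labels c y).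
have hPW : P (size W) by rewrite /P take_size hlong andbT lt0n size_eq0.
case: (ex_minnP (ex_intro P _ hPW)) => k /andP[hk0 hk] hmin.
have hkW : (k <= size W)%N := hmin _ hPW.
set x := take k W; have hsx : size x = k by rewrite size_takel.
have hpar : k != 1 -> has (fun l => prefix (take k.-1 W) l) (live_labels c y).
  move=> hk1; apply/negPn/negP => hn.
  have : (k <= k.-1)%N by apply: hmin; rewrite /P hn andbT; lia.
  by lia.
have hxl l : l \in live_labels c y -> ~~ prefix l x /\ ~~ prefix x l.
  move=> hl; split; last by move/hasPn: hk => /(_ l hl).
  apply/negP => hlx; move/hasPn: hshort => /(_ l hl) /negP; apply.
  exact: prefix_trans hlx (prefix_take _ _).
exists x; first exact: prefix_take.
apply/andP; split.
  apply/and4P; split.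
  - by rewrite -size_eq0 hsx -lt0n.
  - by move: hW; rewrite -(cat_take_drop k W) gread_cat -/x; case: (gread y x).
  - by apply/allP => l /hxl [-> ->].
  - rewrite hsx; case: (eqVneq k 1) => [->//|/hpar].
    by rewrite /x take_takel ?leq_pred.
rewrite hsx; case: (eqVneq k 1) => [->//|/hpar /hasP [l hl hpl]].
have hkW' : (k.-1 <= size W)%N by apply: leq_trans (leq_pred k) hkW.
have [e [_ _] hle] := live_labelsP _ _ _ hl.
have hlr : (size l <= r)%N by rewrite hle; apply: E_max_len.
have hsz1 : (k.-1 <= size l)%N by have := size_prefix hpl; rewrite size_takel.
case: (eqVneq k.-1 (size l)) => heq; last by lia.
have htl : take k.-1 W = l.
  by move: hpl; rewrite prefixE size_takel // heq take_size => /eqP.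
have [/negP hlx _] := hxl l hl; case: hlx.
by rewrite -htl /x; have := prefix_take (take k W) k.-1; rewrite take_takel //; lia.
Qed.

Lemma exit_pedge c y x : exit_word c y x -> (size x <= r)%N ->
  exists ed : pedge, psrc ed = inl (c, y) /\ plab ed = x.
Proof.
move=> hx hxr.
have ht : size (map Some x ++ nseq (r - size x) None) == r.
  by rewrite size_cat size_map size_nseq subnKC.
have hut : untuple (Tuple ht) = x by rewrite /untuple /= pmap_Some_pad.
have hv : pedge_valid (inl (inr ((c, y), Tuple ht))) by rewrite /= /padded hut eqxx hx.
by exists (exist pedge_valid (inl (inr ((c, y), Tuple ht))) hv); rewrite /psrc /plab /= hut.
Qed.

Lemma ppath_prefix n (z : pstate) (W : seq Sigma) : (size W <= n)%N ->
  gread (gstate_of z) W != None -> exists p, @vpath _ prodvlg z p /\ prefix W (vword p).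
Proof.
elim: n z W => [|n IH] z W hn hW.
  by exists [::]; move: hn; rewrite leqn0 size_eq0 => /eqP ->.
have step (ed : pedge) : psrc ed = z -> prefix (plab ed) W ->
    exists p, @vpath _ prodvlg z p /\ prefix W (vword p).
  move=> hs /prefixP [W' hWW].
  have hW' : gread (gstate_of (pdst ed)) W' != None.
    by move: hW; rewrite hWW -hs gread_cat (gread_pedge ed).
  have [|p [hp hpre]] := IH _ _ _ hW'.
    move: hn (plab_neq0 ed); rewrite hWW size_cat -size_eq0.
    by case: (size (plab ed)) => // m; rewrite addSn ltnS => /(leq_trans _)-> //; apply: leq_addl.
  exists (ed :: p); rewrite /= hs eqxx hp vword_cons hWW.
  by split => //; rewrite prefix_catr ?eqxx.
case: W hn hW step => [|a W] hn hW step; first by exists [::].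
case: z hW step => [[c y]|g] /= hW step.
- case: (boolP (has (fun l => prefix l (a :: W)) (live_labels c y))).
    case/hasP => _ /live_labelsP [e [hs hr] ->] hpl.
    by apply: (step (exist pedge_valid (inl (inl (e, y))) hr)) => //; rewrite /psrc /= hs.
  move=> hshort; case: (boolP (has (fun l => prefix (a :: W) l) (live_labels c y))).
    case/hasP => _ /live_labelsP [e [hs hr] ->] hpl.
    exists [:: exist pedge_valid (inl (inl (e, y))) hr].
    by rewrite /= /psrc /= hs eqxx /vword /= cats0.
  move=> hlong.
  have [x hxW /andP[hx hxr]] := @exists_exit_prefix c y (a :: W) isT hW hshort hlong.
  by have [ed [hs hl]] := exit_pedge hx hxr; apply: (step ed) => //; rewrite hl.
- case hs: (gstep g a) hW => [g'|//] _; have [f [h1 h2 _]] := gstep_Some hs.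
  apply: (step (exist pedge_valid (inr f) isT)); first by rewrite /psrc /= h1.
  by rewrite /plab /= h2 eqxx prefix0s.
Qed.

End ProductGraph.

Section TerminalComponent.
Variables (Sigma : finType) (S : seq Sigma -> Prop) (S1 : {set Sigma}) (n0 n1 r : nat).
Variables (G : lgraph Sigma) (E : vlg Sigma) (c0 : vst E) (y0 : gst G).
Hypotheses (n_gt0 : (0 < n0 + n1)%N) (r_gt0 : (0 < r)%N).
Hypotheses (G_det : gdeterministic G) (G_sc : gstrongly_connected G) (G_pres : gpresents G S).
Hypotheses (E_VLE : is_VLE S S1 n0 n1 E) (E_max_len : max_len E r).
Hypothesis c0_tracks : tracks c0 y0.

Local Notation P := (@prodvlg Sigma G E r c0 y0).
Local Notation R := (@vrel _ P).
Local Notation x0 := (inl (c0, y0) : vst P).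

Definition tracked (z : vst P) := if z is inl (c, y) then tracks c y else True.

Lemma tracked_vpath z p : tracked z -> vpath z p -> tracked (vend z p).
Proof.
elim: p z => [|ed p IH] z //= hz /andP[/eqP hs]; apply: IH; rewrite -hs in hz.
case: ed hz {hs} => [[[[e y]|[[c y] t]]|f] hx] //=; rewrite /pdst /=.
- by move=> /tracks_edge/(_ (erefl _)) [y' [-> hy']].
- by case: eqP.
Qed.

Lemma tracked_reachable z : connect R x0 z -> tracked z.
Proof. by move=> /connect_vpath [p [hp <-]]; apply: tracked_vpath. Qed.

Lemma inSH_prodvlg w : inSH P w -> S w.
Proof.
case=> z [p [hp hw]]; have [g [q [hq ->]]] := gread_infix (gread_ppath G_det hp) hw.
by apply/G_pres; exists g, q.
Qed.

Lemma y0_has_out_edge : exists f : ged G, gsrc f = y0.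
Proof.
have [e0 he0] : exists e : ved E, vsrc e = c0.
  have [_ _ /(_ c0) [/kraft_eq1_neq_nil hne _]] := E_VLE.
  have [w /mapP [e + _]] : exists w, w \in out_labels c0.
    by case: (out_labels c0) hne => // w s _; exists w; rewrite mem_head.
  by rewrite mem_filter => /andP[/eqP h _]; exists e.
have [y' [hy' _]] := tracks_edge c0_tracks he0.
move: hy'; case: (vlab e0) (vlab_nonempty e0) => [|a l] //= _.
by case hs: (gstep y0 a) => [g1|//] _; have [f [h1 _ _]] := gstep_Some hs; exists f.
Qed.

Lemma root_reachable_gpath g p : gpath g p -> p != [::] -> gend g p = y0 -> connect R (inr g) x0.
Proof.
elim: p g => [|f p IH] g //= /andP[/eqP hs hp] _ he.
pose ef : ved P := exist _ (inr f) isT.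
have edge z : vdst ef = z -> connect R (inr g) z.
  by move=> hz; apply: connect1; apply/existsP; exists ef; rewrite hz eqxx andbT /= /psrc /ef /= hs.
case: (eqVneq (gdst f) y0) => hd; first by apply: edge; rewrite /= /pdst /= hd eqxx.
apply: connect_trans (edge (inr (gdst f)) _) (IH _ hp _ he); first by rewrite /= /pdst /= ifN.
by apply: contra hd => /eqP p0; move: he; rewrite p0 => <-.
Qed.

Lemma root_reachable_gstate g : connect R (inr g) x0.
Proof.
case: (eqVneq g y0) => [->|hg].
  have [f hf] := y0_has_out_edge; have [p [hp hpe]] := G_sc (gdst f) y0.
  by apply: (@root_reachable_gpath _ (f :: p)); rewrite /= ?hf ?eqxx ?hp.
have [p [hp hpe]] := G_sc g y0; apply: (root_reachable_gpath hp) => //.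
by apply: contra hg => /eqP p0; rewrite -hpe p0.
Qed.

Section Component.
Variable v : vst P.
Hypotheses (v_reached : connect R x0 v) (v_terminal : forall w, connect R v w -> connect R w v).

Local Notation T := [set w | connect R v w].

Lemma component_neq0 : T != set0.
Proof. by apply/set0Pn; exists v; rewrite inE connect0. Qed.

Local Notation C := (subvlg (fun _ : ved P => true) component_neq0).

Lemma component_closed e : vsrc e \in T -> kept T (fun _ => true) e.
Proof.
rewrite /kept andbT => hs; rewrite hs inE; move: hs; rewrite inE => /connect_trans; apply.
by apply: connect1; apply/existsP; exists e; rewrite !eqxx.
Qed.

Lemma component_irreducible : virreducible C.
Proof.
move=> u w; have /connect_vpath [p [hp he]] : connect R (val u) (val w).
  by apply: connect_trans (v_terminal _) _; [move: (valP u) | move: (valP w)]; rewrite inE.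
have [q [hq _ hqe]] := lift_vpath_subvlg component_neq0 component_closed hp.
by exists q; split => //; apply: val_inj; rewrite hqe.
Qed.

Lemma component_presents : vpresents C S.
Proof.
move=> w; split; last by move/inSH_subvlg/inSH_prodvlg.
case/G_pres => g [q [hq ->]]; have [p1 [hp1 hpe1]] := G_sc (gstate_of v) g.
pose W := map (@glab _ G) p1 ++ map (@glab _ G) q.
have hW : gread (gstate_of v) W != None.
  by rewrite gread_cat (gread_gpath G_det hp1) /= hpe1 (gread_gpath G_det hq).
have [p [hp hpre]] := ppath_prefix c0 y0 G_det E_max_len r_gt0 (leqnn _) hW.
have vT : v \in T by rewrite inE connect0.
have [q' [hq' hm _]] := lift_vpath_subvlg component_neq0 component_closed (u := exist _ v vT) hp.
exists (exist _ v vT), q'; split => //; rewrite vword_subvlg hm.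
by apply: infix_prefix_trans hpre; apply: suffix_infix.
Qed.

Definition is_pair (z : vst P) : bool := if z is inl _ then true else false.

Definition pair_states : {set vst C} := [set x | is_pair (val x)].

Lemma pair_states_neq0 : pair_states != set0.
Proof.
suff [c [y hcy]] : exists c y, (inl (c, y) : vst P) \in T.
  by apply/set0Pn; exists (exist (fun z => z \in T) _ hcy); rewrite inE.
case: v => [[c y]|g]; first by exists c, y; rewrite inE connect0.
by exists c0, y0; rewrite inE; apply: root_reachable_gstate.
Qed.

Lemma pair_edge_of_component (x : vst C) c y (ed : ved C) :
  val x = inl (c, y) -> vsrc ed = x -> is_pair (val (vdst ed)) ->
  exists2 e, val (val ed) = inl (inl (e, y)) & vsrc e = c.
Proof.
move=> hx /(congr1 val); rewrite hx.
by case: ed => [[[[[e y']|[[c' y'] t]]|f] ?] ?] //= [<- <-]; exists e.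
Qed.

Lemma induced_out_labels_pair (x : vst C) c y :
  val x = inl (c, y) -> tracks c y -> perm_eq (induced_out_labels pair_states x) (out_labels c).
Proof.
move=> hx hcy; apply/permP => Q; rewrite /induced_out_labels /out_labels !count_map_enum_filter.
pose phi (ed : ved C) : option (ved E) := if val (val ed) is inl (inl (e, _)) then Some e else None.
rewrite -[LHS](card_in_imset (f := phi)); last first.
  move=> ed1 ed2; rewrite !inE => /andP[/and3P[/eqP h1 _ h1'] _] /andP[/and3P[/eqP h2 _ h2'] _].
  have [e1 he1 _] := pair_edge_of_component hx h1 h1'.
  have [e2 he2 _] := pair_edge_of_component hx h2 h2'.
  by rewrite /phi he1 he2 => -[ee]; apply/val_inj/val_inj; rewrite he1 he2 ee.
rewrite -[RHS](card_imset _ (@Some_inj _)); apply: eq_card => o; apply/imsetP/imsetP.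
  case=> ed; rewrite !inE => /andP[/and3P[/eqP h1 _ h1'] hQ] ->.
  have [e he hs] := pair_edge_of_component hx h1 h1'.
  exists e; last by rewrite /phi he.
  by rewrite inE hs eqxx; move: hQ; rewrite /= /sub_lab /plab he.
case=> e; rewrite inE => /andP[/eqP hs hQ] ->.
have [y' [hy' _]] := tracks_edge hcy hs.
have hr : gread y (vlab e) != None by rewrite hy'.
pose ed : ved P := exist _ (inl (inl (e, y))) hr.
have hk : kept T (fun _ => true) ed by apply: component_closed; rewrite /= /psrc /= hs -hx (valP x).
exists (exist _ ed hk : ved C); last by [].
rewrite !inE /= andbT; apply/andP; split; last exact: hQ.
by apply/eqP/val_inj; rewrite /= /psrc /= hs hx.
Qed.

Lemma component_principal : principal_states S1 n0 n1 pair_states.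
Proof.
split => [|x]; first exact: pair_states_neq0.
rewrite inE; case hx: (val x) => [[c y]|//] _.
have hcy : tracks c y.
  suff : tracked (val x) by rewrite hx.
  by apply/tracked_reachable/(connect_trans v_reached); move: (valP x); rewrite inE.
have [hrr hKp hKm] := perm_rr_Kpm S1 n0 n1 (induced_out_labels_pair hx hcy).
have [_ _ /(_ c) [hE3 hE4]] := E_VLE.
have [hp1 hp2] := principal_of_VLE_state n_gt0 hE3 hE4.
by split => [|l]; rewrite hrr hKp hKm //; apply: hp2.
Qed.

End Component.

End TerminalComponent.

Lemma principal_presentation_of_VLE (Sigma : finType) (S : seq Sigma -> Prop) (S1 : {set Sigma})
    (n0 n1 r : nat) (E : vlg Sigma) :
  (0 < n0 + n1)%N -> (0 < r)%N -> irreducible_constraint S ->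
  vdeterministic E -> is_VLE S S1 n0 n1 E -> max_len E r ->
  exists H : vlg Sigma,
    [/\ vdeterministic H, virreducible H, vpresents H S, max_len H r &
        exists V : {set vst H}, principal_states S1 n0 n1 V].
Proof.
move=> n_gt0 r_gt0 [G [G_det G_sc G_pres]] E_det E_VLE E_max_len.
have [_ E_sub _] := E_VLE; have [c0 [y0 c0_tracks]] := exists_tracks G_det G_pres E_sub.
have [v v_reached v_terminal] :=
  exists_terminal_vertex (@vrel _ (@prodvlg _ G E r c0 y0)) (inl (c0, y0)).
exists (subvlg xpredT (component_neq0 v)); split.
- exact/subvlg_det/prodvlg_det.
- exact: component_irreducible.
- exact: component_presents.
- exact/subvlg_max_len/prodvlg_max_len.
- by exists (pair_states v); apply: (component_principal n_gt0 G_sc E_VLE c0_tracks v_reached).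
Qed.

Theorem theorem5 (Sigma : finType) (S : seq Sigma -> Prop) (S1 : {set Sigma})
    (n0 n1 r : nat) :
  irreducible_constraint S ->
  S1 != set0 -> ~: S1 != set0 ->
  0 < n0 -> 0 < n1 -> 0 < r ->
  (exists H : vlg Sigma, [/\ vdeterministic H, is_VLE S S1 n0 n1 H & max_len H r])
  <->
  (exists H : vlg Sigma,
     [/\ vdeterministic H, virreducible H, vpresents H S, max_len H r &
         exists V' : {set vst H}, principal_states S1 n0 n1 V']).
Proof.
move=> S_irr _ _ n0_gt0 _ r_gt0; have n_gt0 : 0 < n0 + n1 by rewrite addn_gt0 n0_gt0.
split => [[E [E_det E_VLE E_max_len]] | [H [H_det _ H_pres H_max_len [V V_principal]]]].
- exact: principal_presentation_of_VLE n_gt0 r_gt0 S_irr E_det E_VLE E_max_len.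
- exact: VLE_of_principal_states n_gt0 V_principal r H_det H_pres H_max_len.
Qed.
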